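(* Let $C_{SR}>C_{SD}=b=\log(1+m)>0$ (with $m>0$) and $c>0$. Let $J$ be either $J_{IA}(\alpha_2,\alpha_3)=b+\log(1+c\alpha_2/\alpha_3)$ or $J_{EA}(\alpha_2,\alpha_3)=\log(1+m+c\alpha_2/\alpha_3)$, with $\alpha_3J:=0$ when $\alpha_3=0$. On the simplex $\Delta=\{(\alpha_1,\alpha_2,\alpha_3)\in[0,1]^3:\alpha_1+\alpha_2+\alpha_3=1\}$ define $$R^{(TS)}(\alpha_1,\alpha_2,\alpha_3)=\min\{\alpha_1C_{SR},\ (\alpha_1+\alpha_2)C_{SD}+\alpha_3J(\alpha_2,\alpha_3)\}.$$ Then every maximizer $(\alpha_1^*,\alpha_2^*,\alpha_3^* )$ of $R^{(TS)}$ over $\Delta$ satisfies $$\alpha_1^*C_{SR}=(\alpha_1^*+\alpha_2^* )C_{SD}+\alpha_3^*J(\alpha_2^*,\alpha_3^* ).$$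
   Context: $\log$ is the natural logarithm. This concerns the time-switching relay protocol: $\alpha_1,\alpha_2,\alpha_3$ are the time fractions of the relay's listening sub-phase, energy-harvesting sub-phase and collaboration phase; in the paper's setting $C_{SR}=\log(1+P_SH_{SR}/\sigma_R^2)$, $C_{SD}=\log(1+P_SH_{SD}/\sigma_D^2)$, $m=P_SH_{SD}/\sigma_D^2$, $c=\eta H_{SR}H_{RD}P_S/\sigma_D^2$. IA = mutual-information accumulation, EA = energy accumulation at the destination. *)

From Stdlib Require Import Reals Lra.
Open Scope R_scope.

Inductive scheme : Type := IA | EA.

Definition J (s : scheme) (m c a2 a3 : R) : R :=
  match s with
  | IA => ln (1 + m) + ln (1 + c * a2 / a3)
  | EA => ln (1 + m + c * a2 / a3)
  end.

Definition a3J (s : scheme) (m c a2 a3 : R) : R :=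
  if Req_EM_T a3 0 then 0 else a3 * J s m c a2 a3.

Definition in_simplex (a1 a2 a3 : R) : Prop :=
  0 <= a1 <= 1 /\ 0 <= a2 <= 1 /\ 0 <= a3 <= 1 /\ a1 + a2 + a3 = 1.

(* C_SD = b = log(1+m). *)
Definition R_TS (s : scheme) (CSR m c a1 a2 a3 : R) : R :=
  Rmin (a1 * CSR) ((a1 + a2) * ln (1 + m) + a3J s m c a2 a3).

(* If the relay rate a1 C_SR is the strict minimum, shifting time from the collaboration
   phases to listening (along the segment towards (1,0,0)) raises it while the destination
   rate stays above it; if the destination rate is the strict minimum, shifting a little
   listening time to the other two phases, in their current ratio, raises the destination
   rate because a3 J is positively homogeneous and its average per unit of time exceeds
   C_SD.  The latter needs the destination rate to exceed C_SD, which holds at a maximizer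
   since the point (1 - 2e, e, e) already achieves more than C_SD for small e. *)
From Pilot Require Import Defs.
From Stdlib Require Import Reals Lra.
Open Scope R_scope.

Lemma J_gt_ln s m c a2 a3 :
  0 < 1 + m -> 0 < c -> 0 < a2 -> 0 < a3 -> ln (1 + m) < J s m c a2 a3.
Proof.
  intros hm hc h2 h3.
  assert (hx : 0 < c * a2 / a3) by (apply Rdiv_lt_0_compat; nra).
  destruct s; simpl.
  - assert (0 < ln (1 + c * a2 / a3)) by (rewrite <- ln_1; apply ln_increasing; lra).
    lra.
  - apply ln_increasing; lra.
Qed.

Lemma J_ge_ln s m c a2 a3 :
  0 < 1 + m -> 0 < c -> 0 <= a2 -> 0 < a3 -> ln (1 + m) <= J s m c a2 a3.
Proof.
  intros hm hc h2 h3.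
  destruct (Req_dec a2 0) as [->|h2'].
  - destruct s; simpl; replace (c * 0 / a3) with 0 by (field; lra);
      rewrite ?Rplus_0_r, ?ln_1; lra.
  - left; apply J_gt_ln; lra.
Qed.

Lemma a3J_ge_linear s m c a2 a3 :
  0 < 1 + m -> 0 < c -> 0 <= a2 -> 0 <= a3 -> ln (1 + m) * a3 <= a3J s m c a2 a3.
Proof.
  intros hm hc h2 h3; unfold a3J.
  destruct (Req_EM_T a3 0) as [->|h3']; [lra|].
  rewrite (Rmult_comm _ a3).
  apply Rmult_le_compat_l; [lra|apply J_ge_ln; lra].
Qed.

Lemma a3J_gt_linear s m c a2 a3 :
  0 < 1 + m -> 0 < c -> 0 < a2 -> 0 < a3 -> ln (1 + m) * a3 < a3J s m c a2 a3.
Proof.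
  intros hm hc h2 h3; unfold a3J.
  destruct (Req_EM_T a3 0) as [->|_]; [lra|].
  rewrite (Rmult_comm _ a3).
  apply Rmult_lt_compat_l; [lra|apply J_gt_ln; lra].
Qed.

Lemma a3J_scale s m c k a2 a3 :
  0 < k -> a3J s m c (k * a2) (k * a3) = k * a3J s m c a2 a3.
Proof.
  intros hk; unfold a3J.
  destruct (Req_EM_T (k * a3) 0) as [e|e], (Req_EM_T a3 0) as [e'|e'].
  - ring.
  - destruct (Rmult_integral _ _ e); lra.
  - subst; lra.
  - destruct s; simpl;
      replace (c * (k * a2) / (k * a3)) with (c * a2 / a3) by (field; lra); ring.
Qed.

Section TimeSwitching.

Variables (s : scheme) (CSR m c : R).
Hypotheses (hm : 0 < m) (hc : 0 < c) (hCSR : ln (1 + m) < CSR).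

Local Notation b := (ln (1 + m)).
Local Notation R_TS := (R_TS s CSR m c).
Local Notation dest_rate a1 a2 a3 := ((a1 + a2) * b + a3J s m c a2 a3).

Definition improvable (a1 a2 a3 : R) : Prop :=
  exists b1 b2 b3, in_simplex b1 b2 b3 /\ R_TS a1 a2 a3 < R_TS b1 b2 b3.

Lemma ln_1p_pos : 0 < b.
Proof. rewrite <- ln_1; apply ln_increasing; lra. Qed.

Lemma R_TS_exceeds_CSD : exists a1 a2 a3, in_simplex a1 a2 a3 /\ b < R_TS a1 a2 a3.
Proof.
  pose proof ln_1p_pos as hb.
  set (e := (CSR - b) / (4 * CSR)).
  assert (he0 : 0 < e) by (apply Rdiv_lt_0_compat; lra).
  assert (he : e * (4 * CSR) = CSR - b) by (unfold e; field; lra).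
  exists (1 - 2 * e), e, e; split; [unfold in_simplex; nra|].
  assert (hJ := a3J_gt_linear s m c e e ltac:(lra) hc he0 he0).
  apply Rmin_glb_lt; nra.
Qed.

Lemma relay_bottleneck_improvable a1 a2 a3 :
  in_simplex a1 a2 a3 -> a1 * CSR < dest_rate a1 a2 a3 -> improvable a1 a2 a3.
Proof.
  intros (h1 & h2 & h3 & hsum) hlt.
  pose proof ln_1p_pos as hb.
  assert (ha1 : a1 < 1).
  { destruct (Req_dec a1 1) as [->|]; [exfalso|lra].
    assert (a2 = 0) as -> by lra; assert (a3 = 0) as -> by lra.
    unfold a3J in hlt; destruct (Req_EM_T 0 0); lra. }
  set (f := a1 * CSR) in *; set (g := dest_rate a1 a2 a3) in *.
  (* move towards (1, 0, 0) until both rates meet *)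
  set (t := (g - f) / (g - f + (CSR - b))).
  assert (ht : t * (g - f + (CSR - b)) = g - f) by (unfold t; field; lra).
  assert (ht0 : 0 < t) by (apply Rdiv_lt_0_compat; lra).
  assert (ht1 : t < 1) by nra.
  exists ((1 - t) * a1 + t), ((1 - t) * a2), ((1 - t) * a3); split.
  { unfold in_simplex; nra. }
  unfold Defs.R_TS; rewrite a3J_scale by lra; fold f g.
  assert (hmeet : ((1 - t) * a1 + t + (1 - t) * a2) * b + (1 - t) * a3J s m c a2 a3
                  = ((1 - t) * a1 + t) * CSR) by (unfold f, g in ht; nra).
  rewrite hmeet, !Rmin_left by lra.
  assert (0 < t * (1 - a1) * CSR) by (apply Rmult_lt_0_compat; nra).
  unfold f; nra.
Qed.

Lemma dest_bottleneck_improvable a1 a2 a3 :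
  in_simplex a1 a2 a3 -> b < dest_rate a1 a2 a3 -> dest_rate a1 a2 a3 < a1 * CSR ->
  improvable a1 a2 a3.
Proof.
  intros (h1 & h2 & h3 & hsum) hgb hlt.
  pose proof ln_1p_pos as hb.
  assert (h23 : 0 < a2 + a3).
  { destruct (Req_dec a3 0) as [->|]; [|lra].
    unfold a3J in hgb; destruct (Req_EM_T 0 0); nra. }
  set (f := a1 * CSR) in *; set (g := dest_rate a1 a2 a3) in *.
  assert (hcollab : (a2 + a3) * b < a2 * b + a3J s m c a2 a3) by (unfold g in hgb; nra).
  set (d := (f - g) / (2 * CSR)).
  assert (hd : d * (2 * CSR) = f - g) by (unfold d; field; lra).
  assert (hd0 : 0 < d) by (apply Rdiv_lt_0_compat; lra).
  assert (hda : d < a1) by (unfold f in hd; nra).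
  set (k := 1 + d / (a2 + a3)).
  assert (hk : k * (a2 + a3) = a2 + a3 + d) by (unfold k; field; lra).
  assert (hk1 : 1 < k) by (unfold k; pose proof (Rdiv_lt_0_compat d (a2 + a3)); lra).
  exists (a1 - d), (k * a2), (k * a3); split.
  { unfold in_simplex; nra. }
  unfold Defs.R_TS; rewrite a3J_scale by lra; fold f g.
  rewrite Rmin_right by lra.
  apply Rmin_glb_lt; unfold f, g in *; nra.
Qed.

End TimeSwitching.

Theorem lemma4 (s : scheme) (CSR m c : R)
  (hm : 0 < m) (hc : 0 < c) (hCSR : ln (1 + m) < CSR)
  (a1 a2 a3 : R) (hin : in_simplex a1 a2 a3)
  (hmax : forall b1 b2 b3 : R, in_simplex b1 b2 b3 ->
            R_TS s CSR m c b1 b2 b3 <= R_TS s CSR m c a1 a2 a3) :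
  a1 * CSR = (a1 + a2) * ln (1 + m) + a3J s m c a2 a3.
Proof.
  assert (hopt : ~ improvable s CSR m c a1 a2 a3).
  { intros (b1 & b2 & b3 & hb & hlt); specialize (hmax b1 b2 b3 hb); lra. }
  destruct (R_TS_exceeds_CSD s CSR m c hm hc hCSR) as (x1 & x2 & x3 & hx & hgt).
  assert (hgb : ln (1 + m) < (a1 + a2) * ln (1 + m) + a3J s m c a2 a3).
  { specialize (hmax x1 x2 x3 hx); unfold R_TS in hmax at 2.
    pose proof (Rmin_r (a1 * CSR) ((a1 + a2) * ln (1 + m) + a3J s m c a2 a3)); lra. }
  destruct (Rtotal_order (a1 * CSR) ((a1 + a2) * ln (1 + m) + a3J s m c a2 a3))
    as [hlt | [heq | hgt']]; [exfalso | exact heq | exfalso]; apply hopt.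
  - exact (relay_bottleneck_improvable s CSR m c hm hCSR a1 a2 a3 hin hlt).
  - exact (dest_bottleneck_improvable s CSR m c hm hCSR a1 a2 a3 hin hgb hgt').
Qed.
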